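(* Let $X$ be a locally path connected space and let $A\subseteq X$ be a closed, path connected subset such that every point of $A$ has a countable local base in $X$. Let $p:X\to X/A$ be the quotient map and $*=p(A)$. Then for every $a\in A$, $\overline{p_*\pi_1^{top}(X,a)}=\pi_1^{top}(X/A,* )$.
   Context: For $A\subseteq X$, $X/A$ denotes the quotient space obtained by collapsing $A$ to a single point $*$, with quotient map $p$. For a pointed space $(X,x)$, the topological fundamental group $\pi_1^{top}(X,x)$ is $\pi_1(X,x)$ with the quotient topology with respect to the canonical surjection from the loop space $\Omega(X,x)$ (based loops $[0,1]\to X$ with the compact-open topology) onto $\pi_1(X,x)$; $p_*$ is the induced continuous homomorphism. *)

From Stdlib Require Import Reals List ClassicalEpsilon.
Open Scope R_scope.

Record Top := {
  pt :> Type;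
  op : (pt -> Prop) -> Prop;
  op_full : op (fun _ => True);
  op_inter : forall U V, op U -> op V -> op (fun x => U x /\ V x);
  op_union : forall F : (pt -> Prop) -> Prop,
      (forall U, F U -> op U) -> op (fun x => exists U, F U /\ U x)
}.

Definition cont {S T : Type} (oS : (S -> Prop) -> Prop) (oT : (T -> Prop) -> Prop)
  (f : S -> T) : Prop := forall V, oT V -> oS (fun s => V (f s)).

Definition closure {T : Type} (oT : (T -> Prop) -> Prop) (S : T -> Prop) (c : T) : Prop :=
  forall W, oT W -> W c -> exists d, W d /\ S d.

Definition closed (X : Top) (A : X -> Prop) : Prop := op X (fun x => ~ A x).

Definition compact {T : Type} (oT : (T -> Prop) -> Prop) (K : T -> Prop) : Prop :=
  forall C : (T -> Prop) -> Prop,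
    (forall U, C U -> oT U) ->
    (forall x, K x -> exists U, C U /\ U x) ->
    exists l : list (T -> Prop),
      (forall U, In U l -> C U) /\ (forall x, K x -> exists U, In U l /\ U x).

Definition I := { t : R | 0 <= t <= 1 }.
Definition I0 : I := exist _ 0 (conj (Rle_refl 0) Rle_0_1).
Definition I1 : I := exist _ 1 (conj Rle_0_1 (Rle_refl 1)).
Definition Iopen (U : I -> Prop) : Prop :=
  forall t, U t -> exists eps, 0 < eps /\
    forall s : I, Rabs (proj1_sig s - proj1_sig t) < eps -> U s.
Definition IIopen (W : I * I -> Prop) : Prop :=
  forall z, W z -> exists U V, Iopen U /\ Iopen V /\ U (fst z) /\ V (snd z) /\
    forall s t, U s -> V t -> W (s, t).

Definition path_connected_subset (X : Top) (A : X -> Prop) : Prop :=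
  (exists a, A a) /\
  forall x y, A x -> A y -> exists g : I -> X,
    cont Iopen (op X) g /\ g I0 = x /\ g I1 = y /\ (forall t, A (g t)).

Definition locally_path_connected (X : Top) : Prop :=
  forall x U, op X U -> U x -> exists V, op X V /\ V x /\
    (forall y, V y -> U y) /\ path_connected_subset X V.

Definition countable_local_base (X : Top) (x : X) : Prop :=
  exists B : nat -> (X -> Prop), (forall n, op X (B n) /\ B n x) /\
    forall U, op X U -> U x -> exists n, forall y, B n y -> U y.

Definition quot (X : Top) (A : X -> Prop) : Type := option { x : X | ~ A x }.
(* None is the collapsed point star *)
Definition qmap (X : Top) (A : X -> Prop) (x : X) : quot X A :=
  match excluded_middle_informative (A x) with
  | left _ => None
  | right h => Some (exist _ x h)
  end.
Definition quot_open (X : Top) (A : X -> Prop) (U : quot X A -> Prop) : Prop :=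
  op X (fun x => U (qmap X A x)).

Definition Omega {T : Type} (oT : (T -> Prop) -> Prop) (x : T) : Type :=
  { f : I -> T | cont Iopen oT f /\ f I0 = x /\ f I1 = x }.

Definition in_VKU {T : Type} (KU : (I -> Prop) * (T -> Prop)) (f : I -> T) : Prop :=
  forall t, fst KU t -> snd KU (f t).

Definition Omega_open {T : Type} (oT : (T -> Prop) -> Prop) (x : T)
  (W : Omega oT x -> Prop) : Prop :=
  forall f, W f -> exists l : list ((I -> Prop) * (T -> Prop)),
    (forall KU, In KU l -> compact Iopen (fst KU) /\ oT (snd KU)) /\
    (forall KU, In KU l -> in_VKU KU (proj1_sig f)) /\
    (forall g : Omega oT x, (forall KU, In KU l -> in_VKU KU (proj1_sig g)) -> W g).

Definition loop_htpc {T : Type} (oT : (T -> Prop) -> Prop) (x : T)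
  (f g : Omega oT x) : Prop :=
  exists H : I * I -> T, cont IIopen oT H /\
    (forall s, H (s, I0) = proj1_sig f s /\ H (s, I1) = proj1_sig g s) /\
    (forall t, H (I0, t) = x /\ H (I1, t) = x).

Definition pi1 {T : Type} (oT : (T -> Prop) -> Prop) (x : T) : Type :=
  { S : Omega oT x -> Prop | exists f, S = loop_htpc oT x f }.

Definition pi1_class {T : Type} (oT : (T -> Prop) -> Prop) (x : T)
  (f : Omega oT x) : pi1 oT x :=
  exist _ (loop_htpc oT x f) (ex_intro _ f eq_refl).

Definition pi1_open {T : Type} (oT : (T -> Prop) -> Prop) (x : T)
  (W : pi1 oT x -> Prop) : Prop :=
  Omega_open oT x (fun f => W (pi1_class oT x f)).

Definition pstar_image (X : Top) (A : X -> Prop) (a : X)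
  (c : pi1 (quot_open X A) None) : Prop :=
  exists (f : Omega (op X) a) (g : Omega (quot_open X A) None),
    (forall t, proj1_sig g t = qmap X A (proj1_sig f t)) /\
    c = pi1_class (quot_open X A) None g.

From Pilot Require Import Defs.
From Stdlib Require Import Reals List ClassicalEpsilon Lra Classical ProofIrrelevance
  FunctionalExtensionality PropExtensionality.
Open Scope R_scope.

(* We show that every basic open neighbourhood of a loop g of X/A at the
   collapsed point (finitely many compact-open conditions g(K_i) ⊆ U_i)
   contains p∘f for some loop f of X at a.

   Key tool: lifting inside an open set O of X/A.  Points of p^{-1}(O) joined
   by paths in p^{-1}(O) form open classes (X is locally path connected), and
   A lies in a single class (A is path connected), so the p-images of the
   classes are open and partition O.  By connectedness of intervals
   ("continuous induction") a path of O lifts, up to a path in p^{-1}(O),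
   between any prescribed preimages of its endpoints.  Near each time u the
   loop g stays in O_u = ∩{U_i | u ∈ K_i} and avoids every K_i not containing
   u (compact sets are closed), so lifting piece by piece, once more by
   continuous induction over [0,1], yields f. *)

Lemma op_ext (X : Top) (U V : X -> Prop) :
  op X U -> (forall x, U x <-> V x) -> op X V.
Proof.
  intros HU H.
  assert (E : U = V).
  { apply functional_extensionality; intro x; apply propositional_extensionality; apply H. }
  now rewrite <- E.
Qed.

Lemma op_local (X : Top) (P : X -> Prop) :
  (forall y, P y -> exists V, op X V /\ V y /\ forall z, V z -> P z) -> op X P.
Proof.
  intros H.
  apply (op_ext X (fun x => exists U, (op X U /\ forall z, U z -> P z) /\ U x)).
  - apply op_union. intros U [HU _]; exact HU.
  - intros x; split.
    + intros [U [[_ HU] Ux]]. auto.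
    + intros Px. destruct (H x Px) as [V [HV [Vx HVP]]]. exists V; auto.
Qed.

Lemma op_finite_inter {T : Type} (X : Top) (l : list T) (Q : T -> X -> Prop) :
  (forall y, In y l -> op X (Q y)) -> op X (fun x => forall y, In y l -> Q y x).
Proof.
  induction l as [|b l IH]; intros H.
  - apply (op_ext X (fun _ => True)); [apply op_full|].
    intros x; split; [intros _ y []|intros; exact Logic.I].
  - apply (op_ext X (fun x => Q b x /\ (forall y, In y l -> Q y x))).
    + apply op_inter; [apply H; left; auto|apply IH; intros; apply H; right; auto].
    + intros x; split.
      * intros [H1 H2] y [<-|Hy]; auto.
      * intros H1; split; [apply H1; left; auto|intros; apply H1; right; auto].
Qed.

Lemma finite_common_radius {T : Type} (l : list T) (Pr : T -> R -> Prop) :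
  (forall x d d', Pr x d -> 0 < d' <= d -> Pr x d') ->
  (forall x, In x l -> exists d, 0 < d /\ Pr x d) ->
  exists d, 0 < d /\ forall x, In x l -> Pr x d.
Proof.
  intros Hm. induction l as [|b l IH]; intros H.
  - exists 1; split; [lra|intros x []].
  - destruct (H b (or_introl eq_refl)) as [d1 [Hd1 P1]].
    destruct IH as [d2 [Hd2 P2]]. { intros; apply H; right; auto. }
    assert (Hmin : 0 < Rmin d1 d2) by (apply Rmin_pos; auto).
    exists (Rmin d1 d2). split; [exact Hmin|].
    intros x [<-|Hx].
    + apply (Hm _ d1); auto. split; [exact Hmin|apply Rmin_l].
    + apply (Hm _ d2); auto. split; [exact Hmin|apply Rmin_r].
Qed.

(* Projection of the real line onto [0,1]; it lets maps on I be read as maps on R. *)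
Lemma clamp_bounds (s : R) : 0 <= Rmax 0 (Rmin s 1) <= 1.
Proof. split; [apply Rmax_l|]. apply Rmax_lub; [lra|apply Rmin_r]. Qed.

Definition clampI (s : R) : I := exist _ (Rmax 0 (Rmin s 1)) (clamp_bounds s).

Lemma clampI_lipschitz s t :
  Rabs (proj1_sig (clampI s) - proj1_sig (clampI t)) <= Rabs (s - t).
Proof.
  simpl. unfold Rmax, Rmin.
  repeat (destruct Rle_dec); unfold Rabs; repeat destruct Rcase_abs; lra.
Qed.

Lemma clampI_retract (t : I) : clampI (proj1_sig t) = t.
Proof.
  destruct t as [t Ht]. apply subset_eq_compat. simpl.
  unfold Rmax, Rmin. repeat destruct Rle_dec; lra.
Qed.

Lemma clampI_0 : clampI 0 = I0.
Proof. exact (clampI_retract I0). Qed.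

Lemma clampI_1 : clampI 1 = I1.
Proof. exact (clampI_retract I1). Qed.

Lemma cont_clampI {T : Type} (oT : (T -> Prop) -> Prop) (g : I -> T) :
  cont Iopen oT g -> forall t V, oT V -> V (g (clampI t)) ->
  exists d, 0 < d /\ forall s, Rabs (s - t) < d -> V (g (clampI s)).
Proof.
  intros Hc t V HV Vt.
  destruct (Hc V HV (clampI t) Vt) as [e [He Hs]].
  exists e; split; auto. intros s Hst. apply Hs.
  eapply Rle_lt_trans; [apply clampI_lipschitz|auto].
Qed.

Definition contOn (X : Top) (lo hi : R) (h : R -> X) : Prop :=
  forall t, lo <= t <= hi -> forall V, op X V -> V (h t) ->
    exists d, 0 < d /\ forall s, lo <= s <= hi -> Rabs (s - t) < d -> V (h s).

Lemma contOn_reparam (X : Top) lo hi (h : R -> X) a b (phi : R -> R) L :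
  contOn X lo hi h -> (forall s, a <= s <= b -> lo <= phi s <= hi) -> 0 < L ->
  (forall s t, Rabs (phi s - phi t) <= L * Rabs (s - t)) ->
  contOn X a b (fun s => h (phi s)).
Proof.
  intros Hc Hr HL Hlip t Ht V HV Vt.
  destruct (Hc (phi t) (Hr t Ht) V HV Vt) as [d [Hd Hs]].
  exists (d / L). split; [apply Rdiv_lt_0_compat; auto|].
  intros s Hs1 Hs2. apply Hs; auto.
  eapply Rle_lt_trans; [apply Hlip|].
  apply (Rmult_lt_compat_l L) in Hs2; auto.
  replace (L * (d / L)) with d in Hs2 by (field; lra). exact Hs2.
Qed.

Lemma contOn_paste (X : Top) lo m hi (f1 f2 : R -> X) :
  contOn X lo m f1 -> contOn X m hi f2 -> f1 m = f2 m ->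
  contOn X lo hi (fun s => if Rle_dec s m then f1 s else f2 s).
Proof.
  intros H1 H2 E t Ht V HV Vt.
  destruct (Rle_dec t m) as [Htm|Htm].
  - destruct (Rle_lt_or_eq_dec t m Htm) as [Hlt|Heq].
    + destruct (H1 t (conj (proj1 Ht) Htm) V HV Vt) as [d [Hd Hs]].
      exists (Rmin d (m - t)). split; [apply Rmin_pos; lra|].
      intros s Hs1 Hs2. pose proof (Rmin_l d (m - t)). pose proof (Rmin_r d (m - t)).
      apply Rabs_def2 in Hs2.
      destruct (Rle_dec s m); [|lra]. apply Hs; [lra|]. apply Rabs_def1; lra.
    + subst t. assert (Vt2 : V (f2 m)) by (rewrite <- E; auto).
      destruct (H1 m (conj (proj1 Ht) (Rle_refl m)) V HV Vt) as [d1 [Hd1 Hl]].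
      destruct (H2 m (conj (Rle_refl m) (proj2 Ht)) V HV Vt2) as [d2 [Hd2 Hr]].
      exists (Rmin d1 d2). split; [apply Rmin_pos; lra|].
      intros s Hs1 Hs2. pose proof (Rmin_l d1 d2). pose proof (Rmin_r d1 d2).
      apply Rabs_def2 in Hs2.
      destruct (Rle_dec s m); [apply Hl|apply Hr]; try lra; apply Rabs_def1; lra.
  - assert (Hmt : m <= t <= hi) by lra.
    destruct (H2 t Hmt V HV Vt) as [d [Hd Hs]].
    exists (Rmin d (t - m)). split; [apply Rmin_pos; lra|].
    intros s Hs1 Hs2. pose proof (Rmin_l d (t - m)). pose proof (Rmin_r d (t - m)).
    apply Rabs_def2 in Hs2.
    destruct (Rle_dec s m); [lra|]. apply Hs; [lra|]. apply Rabs_def1; lra.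
Qed.

(* Continuous induction (connectedness of [lo,hi]): a property holding at lo
   that propagates across small enough subintervals near every point holds at hi. *)
Lemma continuous_induction (lo hi : R) (P : R -> Prop) : lo <= hi -> P lo ->
  (forall u, lo <= u <= hi -> exists d, 0 < d /\ forall v w, lo <= v -> v < w -> w <= hi ->
     Rabs (v - u) < d -> Rabs (w - u) < d -> P v -> P w) -> P hi.
Proof.
  intros Hlh Plo Hloc.
  set (E := fun x => lo <= x <= hi /\ P x).
  destruct (completeness E) as [s [Hub Hlub]].
  - exists hi. intros x [[_ ?] _]. lra.
  - exists lo. split; [lra|auto].
  - assert (Hs1 : lo <= s) by (apply Hub; split; [lra|auto]).
    assert (Hs2 : s <= hi) by (apply Hlub; intros x [[_ ?] _]; lra).
    destruct (Hloc s (conj Hs1 Hs2)) as [d [Hd Hl]].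
    assert (Hx : exists x, E x /\ s - d < x).
    { apply NNPP; intro Hn. assert (s <= s - d); [|lra].
      apply Hlub. intros x Ex. destruct (Rle_or_lt x (s - d)); auto.
      exfalso; apply Hn; exists x; auto. }
    destruct Hx as [x [[[Hx1 Hx2] Px] Hxs]].
    assert (Hxs' : x <= s) by (apply Hub; split; [lra|auto]).
    destruct (Rle_dec hi (s + d / 2)) as [Hh|Hh].
    + destruct (Rle_lt_or_eq_dec x hi Hx2) as [Hlt|Heq]; [|subst; auto].
      apply (Hl x hi); auto; try lra; apply Rabs_def1; lra.
    + (* otherwise P propagates past the supremum *)
      assert (Pw : P (s + d / 2)).
      { apply (Hl x); auto; try lra; apply Rabs_def1; lra. }
      assert (s + d / 2 <= s); [|lra].
      apply Hub. split; [lra|auto].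
Qed.

Definition joined (X : Top) (Z : X -> Prop) (x y : X) : Prop :=
  exists h : R -> X, contOn X 0 1 h /\ h 0 = x /\ h 1 = y /\
    forall s, 0 <= s <= 1 -> Z (h s).

Lemma joined_ends (X : Top) Z x y : joined X Z x y -> Z x /\ Z y.
Proof. intros [h [_ [<- [<- HZ]]]]. split; apply HZ; lra. Qed.

Lemma joined_refl (X : Top) (Z : X -> Prop) x : Z x -> joined X Z x x.
Proof.
  intros Zx. exists (fun _ => x). repeat split; auto.
  intros t Ht V HV Vt. exists 1. split; [lra|auto].
Qed.

Lemma joined_sym (X : Top) Z x y : joined X Z x y -> joined X Z y x.
Proof.
  intros [h [Hc [H0 [H1 HZ]]]]. exists (fun s => h (1 - s)).
  split; [|split; [|split]].
  - apply (contOn_reparam X 0 1 h 0 1 (fun s => 1 - s) 1); auto; [intros; lra|lra|].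
    intros s t. replace (1 - s - (1 - t)) with (- (s - t)) by ring.
    rewrite Rabs_Ropp. lra.
  - replace (1 - 0) with 1 by ring; auto.
  - replace (1 - 1) with 0 by ring; auto.
  - intros s Hs; apply HZ; lra.
Qed.

Lemma joined_trans (X : Top) Z x y z :
  joined X Z x y -> joined X Z y z -> joined X Z x z.
Proof.
  intros [h1 [Hc1 [H10 [H11 HZ1]]]] [h2 [Hc2 [H20 [H21 HZ2]]]].
  exists (fun s => if Rle_dec s (1 / 2) then h1 (2 * s) else h2 (2 * s - 1)).
  split; [|split; [|split]].
  - apply contOn_paste.
    + apply (contOn_reparam X 0 1 h1 0 (1 / 2) (fun s => 2 * s) 2); auto; [intros; lra|lra|].
      intros s t. replace (2 * s - 2 * t) with (2 * (s - t)) by ring.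
      rewrite Rabs_mult, Rabs_pos_eq; lra.
    + apply (contOn_reparam X 0 1 h2 (1 / 2) 1 (fun s => 2 * s - 1) 2); auto;
        [intros; lra|lra|].
      intros s t. replace (2 * s - 1 - (2 * t - 1)) with (2 * (s - t)) by ring.
      rewrite Rabs_mult, Rabs_pos_eq; lra.
    + replace (2 * (1 / 2) - 1) with 0 by field. replace (2 * (1 / 2)) with 1 by field.
      congruence.
  - destruct Rle_dec; [|lra]. replace (2 * 0) with 0 by ring; auto.
  - destruct Rle_dec; [lra|]. replace (2 * 1 - 1) with 1 by ring; auto.
  - intros s Hs. destruct Rle_dec; [apply HZ1|apply HZ2]; lra.
Qed.

Lemma joined_on_interval (X : Top) Z x y v w : joined X Z x y -> v < w ->
  exists h : R -> X, contOn X v w h /\ h v = x /\ h w = y /\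
    forall s, v <= s <= w -> Z (h s).
Proof.
  intros [h [Hc [H0 [H1 HZ]]]] Hvw.
  set (phi := fun s => (s - v) * / (w - v)).
  assert (Hpos : 0 < / (w - v)) by (apply Rinv_0_lt_compat; lra).
  assert (Hr : forall s, v <= s <= w -> 0 <= phi s <= 1).
  { intros s Hs. unfold phi. split.
    - apply Rmult_le_pos; lra.
    - apply (Rmult_le_reg_r (w - v)); [lra|].
      replace ((s - v) * / (w - v) * (w - v)) with (s - v) by (field; lra). lra. }
  exists (fun s => h (phi s)). split; [|split; [|split]].
  - apply (contOn_reparam X 0 1 h v w phi (/ (w - v))); auto.
    intros s t. unfold phi.
    replace ((s - v) * / (w - v) - (t - v) * / (w - v)) with (/ (w - v) * (s - t))
      by (field; lra).
    rewrite Rabs_mult, (Rabs_pos_eq (/ (w - v))); lra.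
  - unfold phi. replace ((v - v) * / (w - v)) with 0 by (field; lra). auto.
  - unfold phi. replace ((w - v) * / (w - v)) with 1 by (field; lra). auto.
  - intros s Hs. apply HZ. auto.
Qed.

Lemma joined_of_path (X : Top) (Z : X -> Prop) (g : I -> X) :
  cont Iopen (op X) g -> (forall t, Z (g t)) -> joined X Z (g I0) (g I1).
Proof.
  intros Hc HZ. exists (fun s => g (clampI s)). split; [|split; [|split]].
  - intros t Ht V HV Vt. destruct (cont_clampI _ g Hc t V HV Vt) as [d [Hd Hs]].
    exists d; split; auto.
  - now rewrite clampI_0.
  - now rewrite clampI_1.
  - intros; apply HZ.
Qed.

(* Compact subsets of I are closed: a point outside K has a neighbourhood
   missing K.  K is covered by the open sets {t | 1/n < |t - u|}. *)
Lemma compact_avoids_nbhd (K : I -> Prop) (u : I) : Defs.compact Iopen K -> ~ K u ->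
  exists d, 0 < d /\ forall t : I, Rabs (proj1_sig t - proj1_sig u) < d -> ~ K t.
Proof.
  intros HK Hu.
  set (far := fun (n : nat) (t : I) => / INR n < Rabs (proj1_sig t - proj1_sig u)).
  set (C := fun V : I -> Prop => exists n : nat, (0 < n)%nat /\ V = far n).
  destruct (HK C) as [l [Hl1 Hl2]].
  - intros V [n [_ ->]] t Ht. unfold far in *.
    exists (Rabs (proj1_sig t - proj1_sig u) - / INR n). split; [lra|].
    intros s Hs.
    pose proof (Rabs_triang (proj1_sig t - proj1_sig s) (proj1_sig s - proj1_sig u)) as Htr.
    replace (proj1_sig t - proj1_sig s + (proj1_sig s - proj1_sig u))
      with (proj1_sig t - proj1_sig u) in Htr by ring.
    rewrite (Rabs_minus_sym (proj1_sig t) (proj1_sig s)) in Htr. lra.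
  - intros x Kx.
    assert (Hne : proj1_sig x <> proj1_sig u).
    { intro E. apply Hu. destruct x as [x hx], u as [u hu]. simpl in E. subst.
      replace hu with hx by apply proof_irrelevance. auto. }
    assert (Hp : 0 < Rabs (proj1_sig x - proj1_sig u)) by (apply Rabs_pos_lt; lra).
    destruct (archimed_cor1 _ Hp) as [n [Hn1 Hn2]].
    exists (far n). split; [exists n; auto|exact Hn1].
  - destruct (finite_common_radius l
                (fun V d => forall t, V t -> d <= Rabs (proj1_sig t - proj1_sig u)))
      as [d [Hd Hall]].
    + intros V d d' H [_ H'] t Vt. specialize (H t Vt). lra.
    + intros V HV. destruct (Hl1 V HV) as [n [Hn ->]].
      exists (/ INR n). split; [apply Rinv_0_lt_compat, lt_0_INR; auto|].
      intros t Ht; unfold far in Ht; lra.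
    + exists d. split; auto. intros t Ht Kt.
      destruct (Hl2 t Kt) as [V [HV Vt]]. specialize (Hall V HV t Vt). lra.
Qed.

Lemma qmap_in_A (X : Top) (A : X -> Prop) x : A x -> qmap X A x = None.
Proof.
  intros Ax. unfold qmap. destruct excluded_middle_informative; [auto|contradiction].
Qed.

Lemma qmap_eq_cases (X : Top) (A : X -> Prop) x y :
  qmap X A x = qmap X A y -> x = y \/ (A x /\ A y).
Proof.
  unfold qmap. destruct (excluded_middle_informative (A x));
    destruct (excluded_middle_informative (A y)); intros H; try discriminate; auto.
  left. apply (f_equal (fun o => match o with Some s => proj1_sig s | None => x end)) in H.
  exact H.
Qed.

Lemma qmap_lift (X : Top) (A : X -> Prop) a : A a ->
  forall q, exists x, qmap X A x = q /\ (q = None -> x = a).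
Proof.
  intros Aa [[x hx]|].
  - exists x. split; [|discriminate]. unfold qmap.
    destruct excluded_middle_informative; [contradiction|].
    f_equal. apply subset_eq_compat. reflexivity.
  - exists a. split; auto. apply qmap_in_A; auto.
Qed.

Section LiftingThroughQuotient.

Variable X : Top.
Variable A : X -> Prop.
Hypothesis hlpc : locally_path_connected X.
Hypothesis hpc : path_connected_subset X A.

Definition preim (O : quot X A -> Prop) : X -> Prop := fun x => O (qmap X A x).

(* Two points with the same image in O are joined inside p^{-1}(O): either
   they are equal or both lie in the path connected set A ⊆ p^{-1}(O). *)
Lemma fiber_joined (O : quot X A -> Prop) x y :
  qmap X A x = qmap X A y -> O (qmap X A x) -> joined X (preim O) x y.
Proof.
  intros E Ox. destruct (qmap_eq_cases X A x y E) as [<-|[Ax Ay]].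
  - apply joined_refl; auto.
  - destruct (proj2 hpc x y Ax Ay) as [g [gc [g0 [g1 gA]]]].
    rewrite <- g0, <- g1. apply joined_of_path; auto.
    intros t. unfold preim. rewrite (qmap_in_A X A _ (gA t)).
    rewrite (qmap_in_A X A _ Ax) in Ox. auto.
Qed.

Lemma joined_class_open (O : quot X A -> Prop) (hO : quot_open X A O) x :
  op X (joined X (preim O) x).
Proof.
  apply op_local. intros y Hy.
  destruct (joined_ends _ _ _ _ Hy) as [_ Zy].
  destruct (hlpc y _ hO Zy) as [V [HV [Vy [VZ [_ Vpc]]]]].
  exists V. split; [auto|split; [auto|]].
  intros z Vz. apply (joined_trans _ _ _ y); auto.
  destruct (Vpc y z Vy Vz) as [g [gc [g0 [g1 gV]]]].
  rewrite <- g0, <- g1. apply joined_of_path; [exact gc|]. intros t; apply VZ, gV.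
Qed.

(* The p-image of a path class of p^{-1}(O) is open in X/A: its preimage is the
   class itself, since fibres over O lie in a single class. *)
Lemma class_image_open (O : quot X A -> Prop) (hO : quot_open X A O) x :
  quot_open X A (fun q => exists y, joined X (preim O) x y /\ qmap X A y = q).
Proof.
  apply (op_ext X _ _ (joined_class_open O hO x)). intros z; split.
  - intros H; exists z; auto.
  - intros [y [Hy E]]. apply (joined_trans _ _ _ y); auto.
    apply fiber_joined; auto. apply (joined_ends _ _ _ _ Hy).
Qed.

(* This is continuous induction,
   each step using the open class image around a lift of G(u). *)
Lemma lift_along_path (O : quot X A -> Prop) (hO : quot_open X A O) (G : R -> quot X A)
  (Gc : forall t V, quot_open X A V -> V (G t) ->
          exists d, 0 < d /\ forall s, Rabs (s - t) < d -> V (G s))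
  v w (vw : v <= w) (HG : forall s, v <= s <= w -> O (G s)) e0 (he0 : qmap X A e0 = G v) :
  exists e, qmap X A e = G w /\ joined X (preim O) e0 e.
Proof.
  destruct hpc as [[a0 Aa0] _].
  apply (continuous_induction v w
           (fun u => exists e, qmap X A e = G u /\ joined X (preim O) e0 e)); auto.
  - exists e0. split; auto. apply joined_refl. unfold preim. rewrite he0. apply HG; lra.
  - intros u Hu.
    destruct (qmap_lift X A a0 Aa0 (G u)) as [eu [Heu _]].
    assert (Zeu : preim O eu) by (unfold preim; rewrite Heu; apply HG; auto).
    destruct (Gc u _ (class_image_open O hO eu)) as [d [Hd Hs]].
    { exists eu. split; auto. apply joined_refl; auto. }
    exists d. split; auto.
    intros v' w' Hv' Hvw' Hw' Hdv Hdw [e [He Pe]].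
    destruct (Hs v' Hdv) as [y [Py Ey]].
    destruct (Hs w' Hdw) as [y' [Py' Ey']].
    exists y'. split; auto.
    (* chain of joins e0 ~ e ~ y ~ eu ~ y' inside p^{-1}(O) *)
    apply (joined_trans _ _ _ e); auto.
    apply (joined_trans _ _ _ y).
    + apply fiber_joined; [congruence|]. rewrite He. apply HG; lra.
    + apply (joined_trans _ _ _ eu); auto. apply joined_sym; auto.
Qed.

End LiftingThroughQuotient.

Section LoopApproximation.

Variable X : Top.
Variable A : X -> Prop.
Hypothesis hlpc : locally_path_connected X.
Hypothesis hpc : path_connected_subset X A.

Variable g : I -> quot X A.
Hypothesis gc : cont Iopen (quot_open X A) g.
Variable l : list ((I -> Prop) * (quot X A -> Prop)).
Hypothesis hl : forall KU, In KU l -> Defs.compact Iopen (fst KU) /\ quot_open X A (snd KU).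
Hypothesis hin : forall KU, In KU l -> in_VKU KU g.

Definition fits (v w : R) (h : R -> X) : Prop :=
  forall KU, In KU l -> forall t, v <= t <= w -> fst KU (clampI t) ->
    snd KU (qmap X A (h t)).

Definition active_nbhd (u : R) (q : quot X A) : Prop :=
  forall KU, In KU l -> fst KU (clampI u) -> snd KU q.

Lemma active_nbhd_open u : quot_open X A (active_nbhd u).
Proof.
  apply (op_finite_inter X l (fun KU x => fst KU (clampI u) -> snd KU (qmap X A x))).
  intros KU HKU. destruct (classic (fst KU (clampI u))) as [Hk|Hk].
  - apply (op_ext X _ _ (proj2 (hl KU HKU))). intros x; split; auto.
  - apply (op_ext X _ _ (op_full X)). intros x; split; [intros _ Hk'; contradiction|].
    intros; exact Logic.I.
Qed.

(* Near u, the loop stays in the active neighbourhood of u, and no condition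
   inactive at u becomes active (the compact sets K are closed). *)
Lemma active_window u : exists d, 0 < d /\ forall s, Rabs (s - u) < d ->
  active_nbhd u (g (clampI s)) /\
  forall KU, In KU l -> fst KU (clampI s) -> fst KU (clampI u).
Proof.
  assert (Hu : active_nbhd u (g (clampI u))) by (intros KU H K; apply (hin KU H); auto).
  destruct (cont_clampI _ g gc u _ (active_nbhd_open u) Hu) as [d2 [Hd2 H2]].
  destruct (finite_common_radius l (fun KU d => ~ fst KU (clampI u) ->
              forall s, Rabs (s - u) < d -> ~ fst KU (clampI s))) as [d1 [Hd1 H1]].
  { intros KU d d' H [_ Hdd] Hk s Hs. apply H; auto. lra. }
  { intros KU HKU. destruct (classic (fst KU (clampI u))) as [Hk|Hk].
    - exists 1; split; [lra|]. intros Hk'; contradiction.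
    - destruct (compact_avoids_nbhd _ _ (proj1 (hl KU HKU)) Hk) as [d [Hd Hd']].
      exists d; split; auto. intros _ s Hs. apply Hd'.
      eapply Rle_lt_trans; [apply clampI_lipschitz|auto]. }
  exists (Rmin d1 d2). split; [apply Rmin_pos; auto|].
  pose proof (Rmin_l d1 d2). pose proof (Rmin_r d1 d2).
  intros s Hs. split; [apply H2; lra|].
  intros KU HKU Ks. apply NNPP. intros Hk. apply (H1 KU HKU Hk s); auto. lra.
Qed.

(* Local lifting: on a small interval [v,w] around u, any preimages of g(v) and
   g(w) are joined by a path that fits, namely a path inside the preimage of
   the active neighbourhood of u. *)
Lemma local_lift u : exists d, 0 < d /\ forall v w, 0 <= v -> v < w -> w <= 1 ->
    Rabs (v - u) < d -> Rabs (w - u) < d -> forall e e',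
    qmap X A e = g (clampI v) -> qmap X A e' = g (clampI w) ->
    exists h : R -> X, contOn X v w h /\ h v = e /\ h w = e' /\ fits v w h.
Proof.
  destruct (active_window u) as [d [Hd Hwin]].
  exists d. split; auto.
  intros v w Hv Hvw Hw Hdv Hdw e e' He He'.
  apply Rabs_def2 in Hdv. apply Rabs_def2 in Hdw.
  assert (Hin : forall s, v <= s <= w -> Rabs (s - u) < d) by (intros; apply Rabs_def1; lra).
  assert (HG : forall s, v <= s <= w -> active_nbhd u (g (clampI s))).
  { intros s Hs. apply (proj1 (Hwin s (Hin s Hs))). }
  destruct (lift_along_path X A hlpc hpc (active_nbhd u) (active_nbhd_open u)
              (fun s => g (clampI s)) (cont_clampI _ g gc) v w (Rlt_le _ _ Hvw) HG e He)
    as [e1 [He1 J1]].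
  assert (J : joined X (preim X A (active_nbhd u)) e e').
  { apply (joined_trans _ _ _ e1); auto. apply fiber_joined; auto; [congruence|].
    rewrite He1. apply HG; lra. }
  destruct (joined_on_interval _ _ _ _ v w J Hvw) as [h [hc [h0 [h1 hZ]]]].
  exists h. repeat split; auto.
  intros KU HKU t Ht Kt. apply (hZ t Ht); auto.
  apply (proj2 (Hwin t (Hin t Ht)) KU HKU Kt).
Qed.

Definition lifts_up_to (a : X) (u : R) : Prop :=
  forall e, qmap X A e = g (clampI u) -> (u = 0 -> e = a) ->
    exists f : R -> X, contOn X 0 u f /\ f 0 = a /\ f u = e /\ fits 0 u f.

Lemma lifts_extend a (Aa : A a) (g0 : g I0 = None) u :
  exists d, 0 < d /\ forall v w, 0 <= v -> v < w -> w <= 1 ->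
    Rabs (v - u) < d -> Rabs (w - u) < d -> lifts_up_to a v -> lifts_up_to a w.
Proof.
  destruct (local_lift u) as [d [Hd Hloc]].
  exists d. split; auto.
  intros v w Hv Hvw Hw Hdv Hdw Sv e' He' _.
  destruct (qmap_lift X A a Aa (g (clampI v))) as [e [He Hea]].
  destruct (Sv e He) as [f [fc [f0 [fv fK]]]].
  { intros ->. apply Hea. rewrite clampI_0; exact g0. }
  destruct (Hloc v w Hv Hvw Hw Hdv Hdw e e' He He') as [h [hc [hv [hw hK]]]].
  exists (fun s => if Rle_dec s v then f s else h s). split; [|split; [|split]].
  - apply contOn_paste; auto. congruence.
  - destruct Rle_dec; [auto|lra].
  - destruct Rle_dec; [lra|auto].
  - intros KU HKU t Ht Kt. destruct Rle_dec; [apply fK|apply hK]; auto; lra.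
Qed.

Lemma loop_approximation a (Aa : A a) (g0 : g I0 = None) (g1 : g I1 = None) :
  exists f : R -> X, contOn X 0 1 f /\ f 0 = a /\ f 1 = a /\ fits 0 1 f.
Proof.
  assert (L1 : lifts_up_to a 1).
  { apply (continuous_induction 0 1 (lifts_up_to a));
      [lra| |intros u _; apply lifts_extend; auto].
    intros e He He0. rewrite (He0 eq_refl) in *. exists (fun _ => a).
    repeat split; auto.
    - intros t Ht V HV Vt. exists 1; split; [lra|auto].
    - intros KU HKU t Ht Kt. assert (t = 0) by lra. subst t.
      rewrite He. apply (hin KU HKU); auto. }
  apply L1; auto. rewrite clampI_1, g1. apply qmap_in_A; auto.
Qed.

End LoopApproximation.

Lemma pi1_class_surjective {T : Type} (oT : (T -> Prop) -> Prop) (x : T) (c : pi1 oT x) :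
  exists f, c = pi1_class oT x f.
Proof.
  destruct c as [S Hs]. pose proof Hs as [f HS]. exists f.
  unfold pi1_class. subst S. f_equal. apply proof_irrelevance.
Qed.

Lemma loop_and_image (X : Top) (A : X -> Prop) a (Aa : A a) (f : R -> X) :
  contOn X 0 1 f -> f 0 = a -> f 1 = a ->
  exists (F : Omega (op X) a) (G : Omega (quot_open X A) None),
    (forall t, proj1_sig G t = qmap X A (proj1_sig F t)) /\
    (forall t, proj1_sig F t = f (proj1_sig t)).
Proof.
  intros fc f0 f1.
  set (F := fun t : I => f (proj1_sig t)).
  assert (Fc : cont Iopen (op X) F).
  { intros V HV [t Ht] Vt.
    destruct (fc t Ht V HV Vt) as [d [Hd Hsd]].
    exists d. split; auto. intros [s Hs] Hst. apply Hsd; auto. }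
  assert (GI0 : qmap X A (F I0) = None) by (apply qmap_in_A; unfold F; simpl; congruence).
  assert (GI1 : qmap X A (F I1) = None) by (apply qmap_in_A; unfold F; simpl; congruence).
  exists (exist _ F (conj Fc (conj f0 f1))).
  exists (exist _ (fun t => qmap X A (F t)) (conj (fun V HV => Fc _ HV) (conj GI0 GI1))).
  split; reflexivity.
Qed.

Theorem theorem3p11 (X : Top) (A : X -> Prop)
  (hlpc : locally_path_connected X)
  (hcl : closed X A)
  (hpc : path_connected_subset X A)
  (hcnt : forall x, A x -> countable_local_base X x) :
  forall a : X, A a ->
  forall c : pi1 (quot_open X A) None,
    closure (pi1_open (quot_open X A) None) (pstar_image X A a) c.
Proof.
  intros a Aa c W HW Wc.
  destruct (pi1_class_surjective _ _ c) as [loop ->].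
  destruct (HW loop Wc) as [l [hl [hin hW]]].
  destruct loop as [g [gc [g0 g1]]].
  destruct (loop_approximation X A hlpc hpc g gc l hl hin a Aa g0 g1)
    as [f [fc [f0 [f1 fK]]]].
  destruct (loop_and_image X A a Aa f fc f0 f1) as [F [G [HG HF]]].
  exists (pi1_class (quot_open X A) None G). split.
  - apply hW. intros KU HKU t Kt. rewrite HG, HF.
    apply (fK KU HKU); [apply (proj2_sig t)|]. rewrite clampI_retract; auto.
  - exists F, G. split; auto.
Qed.
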